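(* For $\epsilon \in [0,1)$, let $H_\epsilon$ be the solution of $$H_\epsilon''(t) = (\epsilon - Q(t)^2)H_\epsilon(t), \quad t > 0, \qquad H_\epsilon(0) = 0,\ H_\epsilon'(0) = -1.$$ Then $H_\epsilon$ changes its sign at least once on $(0,\infty)$. Moreover, its first positive zero $\tau_\epsilon$ satisfies $\tau_\epsilon \ge \tau_0 > 0$, where $\tau_0$ is the first positive zero of $H_0$ (the solution for $\epsilon = 0$).
   Context: $Q(t)$, $t\ge 0$, denotes the radial profile of the positive radial ground state of $\Delta\phi - \phi + |\phi|^2\phi = 0$ on $\mathbb{R}^3$; it solves $-Q'' - \frac{2}{t}Q' + Q - Q^3 = 0$. *)

From Stdlib Require Import Reals Lra.
From Coquelicot Require Import Coquelicot.
Open Scope R_scope.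

Definition is_right_derive (f : R -> R) (a l : R) : Prop :=
  filterlim (fun h => (f (a + h) - f a) / h) (at_right 0) (locally l).

(* Q is the radial profile (on t >= 0) of the positive radial ground state of
   Delta phi - phi + |phi|^2 phi = 0 on R^3: a positive solution of
   -Q'' - (2/t) Q' + Q - Q^3 = 0 on (0,oo), regular at the origin
   (continuous at 0, Q'(0) = 0), decaying to 0 at infinity.
   (By Coffman/Kwong uniqueness, there is exactly one such Q.) *)
Definition radial_ground_state (Q : R -> R) : Prop :=
  (forall t, 0 <= t -> 0 < Q t) /\
  filterlim Q (at_right 0) (locally (Q 0)) /\
  is_right_derive Q 0 0 /\
  (forall t, 0 < t ->
     ex_derive Q t /\ ex_derive (Derive Q) t /\
     - Derive_n Q 2 t - 2 / t * Derive Q t + Q t - Q t ^ 3 = 0) /\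
  is_lim Q p_infty 0.

Definition is_H_sol (Q : R -> R) (eps : R) (H : R -> R) : Prop :=
  H 0 = 0 /\
  is_right_derive H 0 (-1) /\
  (forall t, 0 < t ->
     ex_derive H t /\ ex_derive (Derive H) t /\
     Derive_n H 2 t = (eps - Q t ^ 2) * H t).

Definition changes_sign_pos (H : R -> R) : Prop :=
  exists s t, 0 < s /\ 0 < t /\ H s * H t < 0.

Definition first_pos_zero (H : R -> R) (tau : R) : Prop :=
  0 < tau /\ H tau = 0 /\ (forall t, 0 < t < tau -> H t <> 0).

From Stdlib Require Import Reals Lra Classical.
From Coquelicot Require Import Coquelicot.
Open Scope R_scope.

(* The function w(t) = t Q(t) solves w'' = (1 - Q^2) w, so
   W = w H' - w' H satisfies W' = (eps - 1) w H, and W(0+) = 0.  If H stayed <= 0, W would be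
   nondecreasing, hence >= c > 0 from some point on.  Since Q -> 0, w is eventually convex and
   o(t), hence eventually nonincreasing and bounded by some M; then w H' >= W >= c forces
   H' >= c / M, and H becomes positive.
   For the comparison, V = H0 H' - H0' H satisfies V' = eps H0 H >= 0 and V(0+) = 0 as long as
   H and H0 are negative, so H / H0, whose derivative is V / H0^2, is nondecreasing there.  If
   tau < tau0 it would go from positive values to H(tau) / H0(tau) = 0. *)

Lemma at_right0_iff (P : R -> Prop) :
  at_right 0 P <-> exists d, 0 < d /\ forall t, 0 < t < d -> P t.
Proof.
  split.
  - intros [d Hd]. exists d. split; [apply cond_pos|].
    intros t Ht. apply Hd; [|lra].
    change (Rabs (t - 0) < d). rewrite Rminus_0_r, Rabs_right; lra.
  - intros [d [Hd HP]]. exists (mkposreal d Hd). intros t Ht Hpos.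
    change (Rabs (t - 0) < d) in Ht. rewrite Rminus_0_r, Rabs_right in Ht by lra.
    apply HP. lra.
Qed.

Definition frequently_near0 (P : R -> Prop) : Prop :=
  forall r, 0 < r -> exists s, 0 < s < r /\ P s.

Lemma frequently_near0_and (P P' : R -> Prop) :
  at_right 0 P -> frequently_near0 P' -> frequently_near0 (fun s => P s /\ P' s).
Proof.
  intros HP HP' r Hr. destruct (proj1 (at_right0_iff P) HP) as [d [Hd HPd]].
  destruct (HP' (Rmin r d)) as [s [Hs HPs]]; [now apply Rmin_glb_lt|].
  pose proof (Rmin_l r d). pose proof (Rmin_r r d).
  exists s. split; [lra|]. split; [apply HPd; lra | exact HPs].
Qed.

Lemma frequently_near0_of_at_right0 (P : R -> Prop) :
  at_right 0 P -> frequently_near0 P.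
Proof.
  intros HP r Hr. destruct (proj1 (at_right0_iff P) HP) as [d [Hd HPd]].
  pose proof (Rmin_l r d). pose proof (Rmin_r r d).
  assert (0 < Rmin r d) by now apply Rmin_glb_lt.
  exists (Rmin r d / 2). split; [lra | apply HPd; lra].
Qed.

Lemma right_limit_abs (f : R -> R) (l : R) :
  filterlim f (at_right 0) (locally l) ->
  forall e, 0 < e -> at_right 0 (fun t => Rabs (f t - l) < e).
Proof.
  intros Hf e He. exact (proj1 (filterlim_locally f l) Hf (mkposreal e He)).
Qed.

Lemma bounded_near0_of_right_limit (f : R -> R) (l : R) :
  filterlim f (at_right 0) (locally l) ->
  at_right 0 (fun t => Rabs (f t) <= Rabs l + 1).
Proof.
  intros Hf. eapply filter_imp; [|exact (right_limit_abs f l Hf 1 Rlt_0_1)].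
  intros t Ht. pose proof (Rabs_triang_inv (f t) l). lra.
Qed.

Lemma right_derive_quotient (f : R -> R) (l : R) :
  is_right_derive f 0 l ->
  forall e, 0 < e -> at_right 0 (fun t => Rabs ((f t - f 0) / t - l) < e).
Proof.
  intros Hf e He. eapply filter_imp; [|exact (right_limit_abs _ _ Hf e He)].
  intros t Ht. simpl in Ht. now rewrite Rplus_0_l in Ht.
Qed.

Lemma right_derive_limit (f : R -> R) (l : R) :
  is_right_derive f 0 l -> filterlim f (at_right 0) (locally (f 0)).
Proof.
  intros Hf. apply filterlim_locally. intros e.
  destruct (proj1 (at_right0_iff _) (right_derive_quotient f l Hf 1 Rlt_0_1))
    as [d [Hd Hq]].
  assert (Hl : 0 < Rabs l + 1) by (pose proof (Rabs_pos l); lra).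
  assert (He : 0 < e / (Rabs l + 1)) by (apply Rdiv_lt_0_compat; [apply cond_pos | lra]).
  apply at_right0_iff. exists (Rmin d (e / (Rabs l + 1))).
  split; [now apply Rmin_glb_lt|]. intros t Ht.
  pose proof (Rmin_l d (e / (Rabs l + 1))). pose proof (Rmin_r d (e / (Rabs l + 1))).
  change (Rabs (f t - f 0) < e).
  specialize (Hq t ltac:(lra)). pose proof (Rabs_triang_inv ((f t - f 0) / t) l).
  replace (f t - f 0) with (t * ((f t - f 0) / t)) by (field; lra).
  rewrite Rabs_mult, (Rabs_right t) by lra.
  apply Rle_lt_trans with (t * (Rabs l + 1)); [apply Rmult_le_compat_l; lra|].
  apply Rlt_le_trans with ((e / (Rabs l + 1)) * (Rabs l + 1)).
  - apply Rmult_lt_compat_r; lra.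
  - right. field. lra.
Qed.

Lemma right_derive_neg_near0 (f : R -> R) (l : R) :
  is_right_derive f 0 l -> l < 0 -> at_right 0 (fun t => f t < f 0).
Proof.
  intros Hf Hl.
  destruct (proj1 (at_right0_iff _) (right_derive_quotient f l Hf (- l) ltac:(lra)))
    as [d [Hd Hq]].
  apply at_right0_iff. exists d. split; [exact Hd|]. intros t Ht.
  specialize (Hq t Ht). apply Rabs_lt_between in Hq.
  replace (f t) with (f 0 + t * ((f t - f 0) / t)) by (field; lra).
  assert ((f t - f 0) / t < 0) by lra. nra.
Qed.

Lemma mvt_closed (f df : R -> R) (a b : R) :
  a < b -> (forall x, a <= x <= b -> is_derive f x (df x)) ->
  exists c, a <= c <= b /\ f b - f a = df c * (b - a).
Proof.
  intros Hab Hd. destruct (MVT_gen f a b df) as [c [Hc Hmvt]].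
  - intros x Hx. rewrite Rmin_left, Rmax_right in Hx by lra. apply Hd; lra.
  - intros x Hx. rewrite Rmin_left, Rmax_right in Hx by lra.
    apply continuity_pt_filterlim, (ex_derive_continuous f x). eexists. apply Hd; lra.
  - rewrite Rmin_left, Rmax_right in Hc by lra. now exists c.
Qed.

Lemma nondecreasing_of_derive_nonneg (f df : R -> R) (a b : R) :
  a <= b -> (forall x, a <= x <= b -> is_derive f x (df x)) ->
  (forall x, a <= x <= b -> 0 <= df x) -> f a <= f b.
Proof.
  intros Hab Hd Hpos. destruct (Req_dec a b) as [->|Hne]; [lra|].
  destruct (mvt_closed f df a b) as [c [Hc Hmvt]]; [lra | exact Hd|].
  specialize (Hpos c Hc). nra.
Qed.

Lemma increasing_of_derive_pos (f df : R -> R) (a b : R) :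
  a < b -> (forall x, a <= x <= b -> is_derive f x (df x)) ->
  (forall x, a <= x <= b -> 0 < df x) -> f a < f b.
Proof.
  intros Hab Hd Hpos. destruct (mvt_closed f df a b) as [c [Hc Hmvt]]; [exact Hab | exact Hd|].
  specialize (Hpos c Hc). nra.
Qed.

Lemma exists_pos_of_derive_ge (f df : R -> R) (T c : R) :
  0 < c -> (forall t, T <= t -> is_derive f t (df t)) ->
  (forall t, T <= t -> c <= df t) -> exists t, T <= t /\ 0 < f t.
Proof.
  intros Hc Hd Hge. set (t := T + (Rabs (f T) + 1) / c).
  assert (Ht : 0 < (Rabs (f T) + 1) / c)
    by (apply Rdiv_lt_0_compat; [pose proof (Rabs_pos (f T)) |]; lra).
  destruct (mvt_closed f df T t) as [x [Hx Hmvt]]; [unfold t; lra | intros; apply Hd; lra|].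
  exists t. split; [unfold t; lra|].
  assert (Hinc : c * (t - T) <= df x * (t - T)) by (apply Rmult_le_compat_r; [unfold t|apply Hge]; lra).
  replace (c * (t - T)) with (Rabs (f T) + 1) in Hinc by (unfold t; field; lra).
  pose proof (Rle_abs (- f T)). rewrite Rabs_Ropp in *. lra.
Qed.

Lemma exists_first_pos_zero (f : R -> R) :
  (forall t, 0 < t -> continuous f t) -> at_right 0 (fun t => f t < 0) ->
  (exists t, 0 < t /\ 0 < f t) ->
  exists tau, 0 < tau /\ f tau = 0 /\ forall t, 0 < t < tau -> f t < 0.
Proof.
  intros Hcont Hnear [tp [Htp Hftp]].
  destruct (proj1 (at_right0_iff _) Hnear) as [d [Hd Hfd]].
  set (S := fun x => 0 < x /\ forall t, 0 < t <= x -> f t < 0).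
  destruct (completeness S) as [tau [Hub Hlub]].
  - exists tp. intros x [Hx Hfx]. apply Rnot_lt_le. intros Hlt.
    specialize (Hfx tp ltac:(lra)). lra.
  - exists (d / 2). split; [lra|]. intros t Ht. apply Hfd. lra.
  - assert (Htau : d / 2 <= tau) by (apply Hub; split; [lra | intros t Ht; apply Hfd; lra]).
    assert (Hbelow : forall t, 0 < t < tau -> f t < 0).
    { intros t Ht. destruct (classic (exists x, S x /\ t <= x)) as [[x [[_ Hx] Htx]]|Hno].
      - apply Hx. lra.
      - assert (tau <= t); [|lra]. apply Hlub. intros x Sx. apply Rnot_lt_le. intros Htx.
        apply Hno. exists x. split; [exact Sx | lra]. }
    exists tau. split; [lra|]. split; [|exact Hbelow].
    assert (Heps : forall e, 0 < e -> exists r, 0 < r /\ forall y, Rabs (y - tau) < r -> Rabs (f y - f tau) < e).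
    { intros e He. destruct (proj1 (filterlim_locally (F := locally tau) f (f tau)) (Hcont tau ltac:(lra)) (mkposreal e He))
        as [r Hr]. exists r. split; [apply cond_pos|]. intros y Hy. exact (Hr y Hy). }
    destruct (Rtotal_order (f tau) 0) as [Hneg|[Hz|Hpos]]; [exfalso| exact Hz | exfalso].
    + destruct (Heps (- f tau) ltac:(lra)) as [r [Hr Hfr]].
      assert (tau + r / 2 <= tau); [|lra].
      apply Hub. split; [lra|]. intros t Ht.
      destruct (Rlt_le_dec t tau) as [Hlt|Hge]; [apply Hbelow; lra|].
      specialize (Hfr t ltac:(apply Rabs_lt_between; lra)). apply Rabs_lt_between in Hfr. lra.
    + destruct (Heps (f tau) Hpos) as [r [Hr Hfr]].
      pose proof (Rmax_l (tau - r / 2) (tau / 2)). pose proof (Rmax_r (tau - r / 2) (tau / 2)).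
      assert (Rmax (tau - r / 2) (tau / 2) < tau) by (apply Rmax_lub_lt; lra).
      set (y := Rmax (tau - r / 2) (tau / 2)) in *.
      specialize (Hfr y ltac:(apply Rabs_lt_between; lra)). apply Rabs_lt_between in Hfr.
      specialize (Hbelow y ltac:(lra)). lra.
Qed.

Lemma derive_nonpos_of_convex_sublinear (f df : R -> R) (T : R) :
  0 <= T -> (forall t, T <= t -> is_derive f t (df t)) ->
  (forall x y, T <= x <= y -> df x <= df y) -> (forall t, T <= t -> 0 <= f t) ->
  (forall e, 0 < e -> exists M, forall t, M < t -> f t < e * t) ->
  forall t, T <= t -> df t <= 0.
Proof.
  intros HT Hd Hmono Hpos Hsub t1 Ht1. apply Rnot_lt_le. intros Hslope.
  destruct (Hsub (df t1 / 2)) as [M HM]; [lra|].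
  set (t := Rmax (2 * t1) M + 1).
  pose proof (Rmax_l (2 * t1) M). pose proof (Rmax_r (2 * t1) M).
  destruct (mvt_closed f df t1 t) as [c [Hc Hmvt]]; [unfold t; lra | intros; apply Hd; lra|].
  specialize (Hmono t1 c ltac:(lra)). specialize (Hpos t1 Ht1).
  specialize (HM t ltac:(unfold t; lra)).
  assert (df t1 * (t - t1) <= df c * (t - t1)) by (apply Rmult_le_compat_r; unfold t in *; lra).
  assert (df t1 * (t / 2) <= df t1 * (t - t1)) by (apply Rmult_le_compat_l; unfold t in *; lra).
  lra.
Qed.

Lemma bounded_near0_of_derive (f df : R -> R) (B : R) :
  (forall t, 0 < t -> is_derive f t (df t)) -> at_right 0 (fun t => Rabs (df t) <= B) ->
  exists C, at_right 0 (fun t => Rabs (f t) <= C).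
Proof.
  intros Hd HB. destruct (proj1 (at_right0_iff _) HB) as [d [Hd0 Hbd]].
  set (a := d / 2).
  assert (HB0 : 0 <= B) by (pose proof (Rabs_pos (df a)); pose proof (Hbd a); unfold a in *; lra).
  exists (Rabs (f a) + B * a). apply at_right0_iff. exists a. split; [unfold a; lra|].
  intros t Ht.
  assert (Hvar : Rabs (f t - f a) <= B * Rabs (t - a)).
  { apply (bounded_variation f df). intros s Hs.
    rewrite (Rabs_left (t - a)) in Hs by lra. apply Rabs_le_between in Hs.
    split; [apply Hd | apply Hbd]; unfold a in *; lra. }
  rewrite (Rabs_left (t - a)) in Hvar by lra.
  pose proof (Rabs_triang_inv (f t) (f a)).
  assert (B * - (t - a) <= B * a) by (apply Rmult_le_compat_l; lra). lra.
Qed.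

Lemma mul_id_limit0 (f : R -> R) (K : R) :
  at_right 0 (fun t => Rabs (f t) <= K) -> filterlim (fun t => t * f t) (at_right 0) (locally 0).
Proof.
  intros HK. apply filterlim_locally. intros e.
  destruct (proj1 (at_right0_iff _) HK) as [d [Hd HKd]].
  assert (HK1 : 0 < Rabs K + 1) by (pose proof (Rabs_pos K); lra).
  assert (He : 0 < e / (Rabs K + 1)) by (apply Rdiv_lt_0_compat; [apply cond_pos | lra]).
  apply at_right0_iff. exists (Rmin d (e / (Rabs K + 1))).
  split; [now apply Rmin_glb_lt|]. intros t Ht.
  pose proof (Rmin_l d (e / (Rabs K + 1))). pose proof (Rmin_r d (e / (Rabs K + 1))).
  change (Rabs (t * f t - 0) < e). rewrite Rminus_0_r, Rabs_mult, (Rabs_right t) by lra.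
  specialize (HKd t ltac:(lra)). pose proof (Rle_abs K).
  apply Rle_lt_trans with (t * (Rabs K + 1)); [apply Rmult_le_compat_l; lra|].
  apply Rlt_le_trans with ((e / (Rabs K + 1)) * (Rabs K + 1)).
  - apply Rmult_lt_compat_r; lra.
  - right. field. lra.
Qed.

(* [s f'(s)] need not tend to 0, but by the mean value theorem on [r/2, r] it is small
   somewhere in every such interval. *)
Lemma frequently_small_mul_derive (f : R -> R) (l : R) :
  (forall t, 0 < t -> ex_derive f t) -> filterlim f (at_right 0) (locally l) ->
  forall e, 0 < e -> frequently_near0 (fun s => Rabs (s * Derive f s) < e).
Proof.
  intros Hd Hl e He r Hr.
  destruct (proj1 (at_right0_iff _) (right_limit_abs f l Hl (e / 4) ltac:(lra)))
    as [d [Hd0 Hnear]].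
  set (b := Rmin r d / 2).
  assert (Hb : 0 < b /\ b < r /\ b < d).
  { pose proof (Rmin_l r d). pose proof (Rmin_r r d).
    assert (0 < Rmin r d) by now apply Rmin_glb_lt. unfold b; lra. }
  destruct (mvt_closed f (Derive f) (b / 2) b) as [c [Hc Hmvt]];
    [lra | intros x Hx; apply Derive_correct, Hd; lra|].
  exists c. split; [lra|].
  assert (Hinc : Rabs (Derive f c * (b / 2)) < e / 2).
  { replace (Derive f c * (b / 2)) with (f b - f (b / 2)) by (rewrite Hmvt; field).
    pose proof (Hnear b ltac:(lra)) as Hb1. pose proof (Hnear (b / 2) ltac:(lra)) as Hb2.
    apply Rabs_lt_between in Hb1. apply Rabs_lt_between in Hb2.
    apply Rabs_lt_between. lra. }
  rewrite Rabs_mult in *. rewrite (Rabs_right c) by lra. rewrite (Rabs_right (b / 2)) in Hinc by lra.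
  pose proof (Rabs_pos (Derive f c)). nra.
Qed.

Lemma nonneg_of_nondecreasing_frequently (F : R -> R) (b : R) :
  (forall x y, 0 < x <= y -> y <= b -> F x <= F y) ->
  (forall m, 0 < m -> frequently_near0 (fun s => - m < F s)) ->
  forall t, 0 < t <= b -> 0 <= F t.
Proof.
  intros Hmono Hnear t Ht. apply Rnot_lt_le. intros Hneg.
  destruct (Hnear (- F t) ltac:(lra) t ltac:(lra)) as [s [Hs HFs]].
  specialize (Hmono s t ltac:(lra) ltac:(lra)). lra.
Qed.

Definition is_sol_pos (p y dy : R -> R) : Prop :=
  forall t, 0 < t -> is_derive y t (dy t) /\ is_derive dy t (p t * y t).

Definition wronskian (f df g dg : R -> R) (t : R) : R := f t * dg t - df t * g t.

Lemma wronskian_derive (p q f df g dg : R -> R) :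
  is_sol_pos p f df -> is_sol_pos q g dg ->
  forall t, 0 < t -> is_derive (wronskian f df g dg) t ((q t - p t) * f t * g t).
Proof.
  intros Hf Hg t Ht. destruct (Hf t Ht) as [Hf1 Hf2]. destruct (Hg t Ht) as [Hg1 Hg2].
  pose proof (is_derive_minus _ _ _ _ _
    (is_derive_mult _ _ _ _ _ Hf1 Hg2 (fun _ _ => Rmult_comm _ _))
    (is_derive_mult _ _ _ _ _ Hf2 Hg1 (fun _ _ => Rmult_comm _ _))) as Hd.
  replace ((q t - p t) * f t * g t) with
    (minus (plus (mult (df t) (dg t)) (mult (f t) (q t * g t)))
           (plus (mult (p t * f t) (g t)) (mult (df t) (dg t))))
    by (unfold minus, plus, mult, opp; simpl; ring).
  exact Hd.
Qed.

(* Only a frequent bound on [df] is required: for [f = t Q] this is all one gets near 0. *)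
Lemma wronskian_frequently_small (f df g dg : R -> R) (Bf Bg : R) :
  filterlim f (at_right 0) (locally 0) -> frequently_near0 (fun s => Rabs (df s) <= Bf) ->
  filterlim g (at_right 0) (locally 0) -> at_right 0 (fun s => Rabs (dg s) <= Bg) ->
  forall m, 0 < m -> frequently_near0 (fun s => Rabs (wronskian f df g dg s) < m).
Proof.
  intros Hf Hdf Hg Hdg m Hm.
  assert (Hf' : 0 < m / 2 / (Rabs Bg + 1)) by (pose proof (Rabs_pos Bg); apply Rdiv_lt_0_compat; lra).
  assert (Hg' : 0 < m / 2 / (Rabs Bf + 1)) by (pose proof (Rabs_pos Bf); apply Rdiv_lt_0_compat; lra).
  pose proof (filter_and _ _ (right_limit_abs f 0 Hf _ Hf')
               (filter_and _ _ (right_limit_abs g 0 Hg _ Hg') Hdg)) as Hnear.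
  intros r Hr. destruct (frequently_near0_and _ _ Hnear Hdf r Hr) as [s [Hs [[Hfs [Hgs Hdgs]] Hdfs]]].
  exists s. split; [exact Hs|].
  rewrite Rminus_0_r in Hfs, Hgs. unfold wronskian.
  pose proof (Rabs_triang (f s * dg s) (- (df s * g s))). rewrite Rabs_Ropp in *.
  rewrite !Rabs_mult in *. pose proof (Rle_abs Bf). pose proof (Rle_abs Bg).
  pose proof (Rabs_pos (f s)). pose proof (Rabs_pos (g s)).
  pose proof (Rabs_pos (dg s)). pose proof (Rabs_pos (df s)).
  assert (Rabs (f s) * Rabs (dg s) < m / 2).
  { apply Rle_lt_trans with (Rabs (f s) * (Rabs Bg + 1)); [apply Rmult_le_compat_l; lra|].
    apply Rmult_lt_reg_r with (/ (Rabs Bg + 1)); [apply Rinv_0_lt_compat; lra|].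
    replace (Rabs (f s) * (Rabs Bg + 1) * / (Rabs Bg + 1)) with (Rabs (f s)) by (field; lra).
    apply Rlt_le_trans with (m / 2 / (Rabs Bg + 1)); [exact Hfs | right; field; lra]. }
  assert (Rabs (df s) * Rabs (g s) < m / 2).
  { apply Rle_lt_trans with ((Rabs Bf + 1) * Rabs (g s)); [apply Rmult_le_compat_r; lra|].
    apply Rmult_lt_reg_r with (/ (Rabs Bf + 1)); [apply Rinv_0_lt_compat; lra|].
    replace ((Rabs Bf + 1) * Rabs (g s) * / (Rabs Bf + 1)) with (Rabs (g s)) by (field; lra).
    apply Rlt_le_trans with (m / 2 / (Rabs Bf + 1)); [exact Hgs | right; field; lra]. }
  unfold Rminus. lra.
Qed.

Lemma wronskian_nonneg (p q f df g dg : R -> R) (Bf Bg b : R) :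
  is_sol_pos p f df -> is_sol_pos q g dg ->
  filterlim f (at_right 0) (locally 0) -> frequently_near0 (fun s => Rabs (df s) <= Bf) ->
  filterlim g (at_right 0) (locally 0) -> at_right 0 (fun s => Rabs (dg s) <= Bg) ->
  (forall t, 0 < t <= b -> 0 <= (q t - p t) * f t * g t) ->
  forall t, 0 < t <= b -> 0 <= wronskian f df g dg t.
Proof.
  intros Hf Hg Hf0 Hdf Hg0 Hdg Hsign. apply nonneg_of_nondecreasing_frequently.
  - intros x y Hxy Hy. apply (nondecreasing_of_derive_nonneg _ (fun t => (q t - p t) * f t * g t) x y ltac:(lra)).
    + intros z Hz. apply (wronskian_derive p q); auto; lra.
    + intros z Hz. apply Hsign. lra.
  - intros m Hm r Hr.
    destruct (wronskian_frequently_small f df g dg Bf Bg Hf0 Hdf Hg0 Hdg m Hm r Hr) as [s [Hs Hw]].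
    exists s. split; [exact Hs|]. apply Rabs_lt_between in Hw. lra.
Qed.

Lemma sturm_first_zero_le (p q f df g dg : R -> R) (Bf Bg tf tg : R) :
  is_sol_pos p f df -> is_sol_pos q g dg -> (forall t, 0 < t -> p t <= q t) ->
  filterlim f (at_right 0) (locally 0) -> at_right 0 (fun s => Rabs (df s) <= Bf) ->
  filterlim g (at_right 0) (locally 0) -> at_right 0 (fun s => Rabs (dg s) <= Bg) ->
  (forall t, 0 < t < tf -> f t < 0) ->
  0 < tg -> g tg = 0 -> (forall t, 0 < t < tg -> g t < 0) -> tf <= tg.
Proof.
  intros Hf Hg Hpq Hf0 Hdf Hg0 Hdg Hfneg Htg Hgz Hgneg. apply Rnot_lt_le. intros Hlt.
  assert (Hgle : forall t, 0 < t <= tg -> g t <= 0).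
  { intros t Ht. destruct (Req_dec t tg) as [->|]; [lra|]. specialize (Hgneg t ltac:(lra)). lra. }
  assert (Hw : forall t, 0 < t <= tg -> 0 <= wronskian f df g dg t).
  { apply (wronskian_nonneg p q f df g dg Bf Bg tg Hf Hg Hf0
             (frequently_near0_of_at_right0 _ Hdf) Hg0 Hdg).
    intros t Ht. specialize (Hpq t ltac:(lra)). specialize (Hfneg t ltac:(lra)).
    specialize (Hgle t Ht). assert (0 <= (q t - p t) * - f t) by nra. nra. }
  assert (Hratio : g (tg / 2) / f (tg / 2) <= g tg / f tg).
  { apply (nondecreasing_of_derive_nonneg (fun t => g t / f t)
             (fun t => wronskian f df g dg t / f t ^ 2));
      [lra | intros t Ht | intros t Ht];
      destruct (Hf t ltac:(lra)) as [Hf1 _]; destruct (Hg t ltac:(lra)) as [Hg1 _];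
      specialize (Hfneg t ltac:(lra)).
    - unfold wronskian.
      replace ((f t * dg t - df t * g t) / f t ^ 2) with ((dg t * f t - g t * df t) / f t ^ 2)
        by (field; lra).
      apply is_derive_div; auto; lra.
    - apply Rmult_le_pos; [apply Hw; lra | apply Rlt_le, Rinv_0_lt_compat; nra]. }
  rewrite Hgz in Hratio. replace (0 / f tg) with 0 in Hratio by (unfold Rdiv; ring).
  specialize (Hfneg (tg / 2) ltac:(lra)). specialize (Hgneg (tg / 2) ltac:(lra)).
  assert (0 < g (tg / 2) / f (tg / 2)).
  { unfold Rdiv. assert (/ f (tg / 2) < 0) by (apply Rinv_lt_0_compat; lra). nra. }
  lra.
Qed.

Lemma H_sol_is_sol_pos (Q : R -> R) (eps : R) (H : R -> R) :
  is_H_sol Q eps H -> is_sol_pos (fun t => eps - Q t ^ 2) H (Derive H).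
Proof.
  intros [_ [_ Hode]] t Ht. destruct (Hode t Ht) as [Hd1 [Hd2 Heq]].
  split; [now apply Derive_correct|]. rewrite <- Heq. now apply Derive_correct.
Qed.

Lemma H_sol_limit0 (Q : R -> R) (eps : R) (H : R -> R) :
  is_H_sol Q eps H -> filterlim H (at_right 0) (locally 0).
Proof.
  intros [H0 [Hd _]]. rewrite <- H0 at 2. exact (right_derive_limit H (-1) Hd).
Qed.

Lemma H_sol_neg_near0 (Q : R -> R) (eps : R) (H : R -> R) :
  is_H_sol Q eps H -> at_right 0 (fun t => H t < 0).
Proof.
  intros [H0 [Hd _]]. eapply filter_imp; [|exact (right_derive_neg_near0 H (-1) Hd ltac:(lra))].
  intros t Ht. now rewrite <- H0.
Qed.

Lemma H_sol_derive_bounded_near0 (Q : R -> R) (eps : R) (H : R -> R) :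
  radial_ground_state Q -> is_H_sol Q eps H ->
  exists B, at_right 0 (fun t => Rabs (Derive H t) <= B).
Proof.
  intros [_ [HQ0 _]] HH.
  set (K := Rabs (Q 0) + 1).
  apply (bounded_near0_of_derive (Derive H) (fun t => (eps - Q t ^ 2) * H t)
           ((Rabs eps + K ^ 2) * (Rabs 0 + 1))).
  - intros t Ht. exact (proj2 (H_sol_is_sol_pos Q eps H HH t Ht)).
  - eapply filter_imp; [|exact (filter_and _ _ (bounded_near0_of_right_limit Q (Q 0) HQ0)
                                   (bounded_near0_of_right_limit H 0 (H_sol_limit0 Q eps H HH)))].
    intros t [HQt HHt]. rewrite Rabs_mult.
    apply Rmult_le_compat; try apply Rabs_pos; [|exact HHt].
    pose proof (Rabs_triang eps (- Q t ^ 2)) as Htri. rewrite Rabs_Ropp, <- RPow_abs in Htri.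
    assert (Rabs (Q t) ^ 2 <= K ^ 2) by (apply pow_incr; split; [apply Rabs_pos | exact HQt]).
    unfold Rminus. lra.
Qed.

Definition radial_w (Q : R -> R) (t : R) : R := t * Q t.

Definition radial_dw (Q : R -> R) (t : R) : R := Q t + t * Derive Q t.

Lemma radial_w_is_sol (Q : R -> R) :
  radial_ground_state Q -> is_sol_pos (fun t => 1 - Q t ^ 2) (radial_w Q) (radial_dw Q).
Proof.
  intros [_ [_ [_ [Hode _]]]] t Ht. destruct (Hode t Ht) as [HdQ [HddQ Heq]].
  apply Derive_correct in HdQ. apply Derive_correct in HddQ.
  change (Derive_n Q 2 t) with (Derive (Derive Q) t) in Heq.
  unfold radial_w, radial_dw. split.
  - pose proof (is_derive_mult _ _ _ _ _ (is_derive_id t) HdQ (fun _ _ => Rmult_comm _ _)) as Hd.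
    replace (Q t + t * Derive Q t) with (plus (mult one (Q t)) (mult t (Derive Q t)))
      by (unfold plus, mult, one; simpl; ring).
    exact Hd.
  - pose proof (is_derive_plus _ _ _ _ _ HdQ
      (is_derive_mult _ _ _ _ _ (is_derive_id t) HddQ (fun _ _ => Rmult_comm _ _))) as Hd.
    replace ((1 - Q t ^ 2) * (t * Q t))
      with (plus (Derive Q t) (plus (mult one (Derive Q t)) (mult t (Derive (Derive Q) t)))).
    + exact Hd.
    + unfold plus, mult, one; simpl.
      replace (Derive (Derive Q) t) with (- 2 / t * Derive Q t + Q t - Q t ^ 3) by lra.
      field. lra.
Qed.

Lemma radial_w_pos (Q : R -> R) (t : R) :
  radial_ground_state Q -> 0 < t -> 0 < radial_w Q t.
Proof.
  intros [HQpos _] Ht. unfold radial_w. specialize (HQpos t ltac:(lra)). nra.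
Qed.

Lemma radial_w_limit0 (Q : R -> R) :
  radial_ground_state Q -> filterlim (radial_w Q) (at_right 0) (locally 0).
Proof.
  intros [_ [HQ0 _]]. exact (mul_id_limit0 Q _ (bounded_near0_of_right_limit Q (Q 0) HQ0)).
Qed.

Lemma radial_dw_frequently_bounded (Q : R -> R) :
  radial_ground_state Q -> frequently_near0 (fun s => Rabs (radial_dw Q s) <= Rabs (Q 0) + 2).
Proof.
  intros [_ [HQ0 [_ [Hode _]]]] r Hr.
  destruct (frequently_near0_and _ _ (bounded_near0_of_right_limit Q (Q 0) HQ0)
              (frequently_small_mul_derive Q (Q 0) (fun t Ht => proj1 (Hode t Ht)) HQ0 1 Rlt_0_1)
              r Hr) as [s [Hs [HQs HdQs]]].
  exists s. split; [exact Hs|]. unfold radial_dw.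
  pose proof (Rabs_triang (Q s) (s * Derive Q s)). lra.
Qed.

Lemma radial_dw_eventually_nonpos (Q : R -> R) :
  radial_ground_state Q -> exists T, 0 < T /\ forall t, T <= t -> radial_dw Q t <= 0.
Proof.
  intros RQ. pose proof (radial_w_is_sol Q RQ) as Hw.
  assert (Hsmall : forall e, 0 < e -> exists M, forall t, M < t -> Rabs (Q t) < e).
  { intros e He. destruct RQ as [_ [_ [_ [_ HQinf]]]].
    destruct (proj2 (is_lim_spec Q p_infty 0) HQinf (mkposreal e He)) as [M HM].
    exists M. intros t Ht. specialize (HM t Ht). simpl in HM. now rewrite Rminus_0_r in HM. }
  destruct (Hsmall 1 Rlt_0_1) as [M HM].
  pose proof (Rmax_l M 0). pose proof (Rmax_r M 0).
  exists (Rmax M 0 + 1). split; [lra|].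
  apply (derive_nonpos_of_convex_sublinear (radial_w Q) (radial_dw Q)); [lra | | | |].
  - intros t Ht. apply Hw. lra.
  - intros x y Hxy.
    apply (nondecreasing_of_derive_nonneg _ (fun t => (1 - Q t ^ 2) * radial_w Q t));
      [lra | intros t Ht; apply Hw; lra |].
    intros t Ht. specialize (HM t ltac:(lra)). apply Rabs_lt_between in HM.
    pose proof (radial_w_pos Q t RQ ltac:(lra)). apply Rmult_le_pos; nra.
  - intros t Ht. apply Rlt_le, radial_w_pos; [exact RQ | lra].
  - intros e He. destruct (Hsmall e He) as [Me HMe]. exists (Rmax Me 0). intros t Ht.
    pose proof (Rmax_l Me 0). pose proof (Rmax_r Me 0).
    specialize (HMe t ltac:(lra)). apply Rabs_lt_between in HMe.
    unfold radial_w. rewrite (Rmult_comm e). apply Rmult_lt_compat_l; lra.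
Qed.

Lemma H_sol_nonpos_wronskian_pos (Q : R -> R) (eps : R) (H : R -> R) :
  radial_ground_state Q -> eps < 1 -> is_H_sol Q eps H -> (forall t, 0 < t -> H t <= 0) ->
  exists a c, 0 < a /\ 0 < c /\
    forall t, a <= t -> c <= wronskian (radial_w Q) (radial_dw Q) H (Derive H) t.
Proof.
  intros RQ Heps HH Hle.
  pose proof (radial_w_is_sol Q RQ) as Hw. pose proof (H_sol_is_sol_pos Q eps H HH) as Hs.
  set (W := wronskian (radial_w Q) (radial_dw Q) H (Derive H)).
  set (dW := fun t => (eps - 1) * radial_w Q t * H t).
  assert (HdW : forall t, 0 < t -> is_derive W t (dW t)).
  { intros t Ht. unfold dW. replace ((eps - 1) * radial_w Q t * H t)
      with ((eps - Q t ^ 2 - (1 - Q t ^ 2)) * radial_w Q t * H t) by ring.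
    exact (wronskian_derive _ _ _ _ _ _ Hw Hs t Ht). }
  assert (HdW0 : forall t, 0 < t -> 0 <= dW t).
  { intros t Ht. pose proof (radial_w_pos Q t RQ Ht). specialize (Hle t Ht).
    unfold dW. assert ((eps - 1) * radial_w Q t <= 0) by nra. nra. }
  assert (HW0 : forall t, 0 < t -> 0 <= W t).
  { intros t Ht. destruct (H_sol_derive_bounded_near0 Q eps H RQ HH) as [B HB].
    apply (wronskian_nonneg _ _ _ _ _ _ _ _ t Hw Hs (radial_w_limit0 Q RQ)
             (radial_dw_frequently_bounded Q RQ) (H_sol_limit0 Q eps H HH) HB); [|lra].
    intros s Hst. replace ((eps - Q s ^ 2 - (1 - Q s ^ 2)) * radial_w Q s * H s) with (dW s)
      by (unfold dW; ring). apply HdW0. lra. }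
  destruct (proj1 (at_right0_iff _) (H_sol_neg_near0 Q eps H HH)) as [a [Ha Hneg]].
  exists (a / 2), (W (a / 2)). split; [lra|]. split.
  - apply Rle_lt_trans with (W (a / 4)); [apply HW0; lra|].
    apply (increasing_of_derive_pos W dW); [lra | intros t Ht; apply HdW; lra | intros t Ht].
    pose proof (radial_w_pos Q t RQ ltac:(lra)). specialize (Hneg t ltac:(lra)).
    unfold dW. assert ((eps - 1) * radial_w Q t < 0) by nra. nra.
  - intros t Ht. apply (nondecreasing_of_derive_nonneg W dW); [lra | |];
      intros s Hst; [apply HdW | apply HdW0]; lra.
Qed.

Lemma H_sol_takes_pos_value (Q : R -> R) (eps : R) (H : R -> R) :
  radial_ground_state Q -> eps < 1 -> is_H_sol Q eps H -> exists t, 0 < t /\ 0 < H t.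
Proof.
  intros RQ Heps HH. apply NNPP. intros Hno.
  assert (Hle : forall t, 0 < t -> H t <= 0).
  { intros t Ht. apply Rnot_lt_le. intros Hpos. apply Hno. now exists t. }
  destruct (H_sol_nonpos_wronskian_pos Q eps H RQ Heps HH Hle) as [a [c [Ha [Hc HW]]]].
  destruct (radial_dw_eventually_nonpos Q RQ) as [T [HT Hdw]].
  pose proof (Rmax_l T a). pose proof (Rmax_r T a). set (T1 := Rmax T a) in *.
  assert (HwT1 : 0 < radial_w Q T1) by (apply radial_w_pos; [exact RQ | lra]).
  assert (Hwle : forall t, T1 <= t -> radial_w Q t <= radial_w Q T1).
  { intros t Ht. destruct (Req_dec t T1) as [->|Hne]; [lra|].
    destruct (mvt_closed (radial_w Q) (radial_dw Q) T1 t) as [s [Hs Hmvt]];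
      [lra | intros s Hs; apply (radial_w_is_sol Q RQ); lra|].
    specialize (Hdw s ltac:(lra)). nra. }
  destruct (exists_pos_of_derive_ge H (Derive H) T1 (c / radial_w Q T1)) as [t [Ht Hpos]].
  - now apply Rdiv_lt_0_compat.
  - intros t Ht. apply (H_sol_is_sol_pos Q eps H HH). lra.
  - intros t Ht. pose proof (radial_w_pos Q t RQ ltac:(lra)).
    specialize (HW t ltac:(lra)). specialize (Hdw t ltac:(lra)).
    specialize (Hle t ltac:(lra)). specialize (Hwle t Ht). unfold wronskian in HW.
    assert (c <= radial_w Q t * Derive H t) by nra.
    assert (0 < Derive H t) by nra.
    apply (Rmult_le_reg_r (radial_w Q T1)); [exact HwT1|].
    unfold Rdiv. rewrite Rmult_assoc, Rinv_l by lra. nra.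
  - specialize (Hle t ltac:(lra)). lra.
Qed.

Lemma H_sol_first_zero (Q : R -> R) (eps : R) (H : R -> R) :
  radial_ground_state Q -> eps < 1 -> is_H_sol Q eps H ->
  exists tau, 0 < tau /\ H tau = 0 /\ forall t, 0 < t < tau -> H t < 0.
Proof.
  intros RQ Heps HH. apply exists_first_pos_zero.
  - intros t Ht. apply (ex_derive_continuous H). eexists.
    apply (H_sol_is_sol_pos Q eps H HH t Ht).
  - exact (H_sol_neg_near0 Q eps H HH).
  - exact (H_sol_takes_pos_value Q eps H RQ Heps HH).
Qed.

Theorem lemma7p1 (Q : R -> R) (eps : R) (H H0 : R -> R) :
  radial_ground_state Q ->
  0 <= eps < 1 ->
  is_H_sol Q eps H ->
  is_H_sol Q 0 H0 ->
  changes_sign_pos H /\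
  exists tau tau0,
    first_pos_zero H tau /\ first_pos_zero H0 tau0 /\
    tau0 <= tau /\ 0 < tau0.
Proof.
  intros RQ Heps HH HH0.
  destruct (H_sol_first_zero Q eps H RQ (proj2 Heps) HH) as [tau [Htau [Hz Hneg]]].
  destruct (H_sol_first_zero Q 0 H0 RQ ltac:(lra) HH0) as [tau0 [Htau0 [Hz0 Hneg0]]].
  destruct (H_sol_takes_pos_value Q eps H RQ (proj2 Heps) HH) as [tp [Htp Hpos]].
  destruct (H_sol_derive_bounded_near0 Q eps H RQ HH) as [B HB].
  destruct (H_sol_derive_bounded_near0 Q 0 H0 RQ HH0) as [B0 HB0].
  split.
  - exists (tau / 2), tp. specialize (Hneg (tau / 2) ltac:(lra)). repeat split; nra.
  - exists tau, tau0. repeat split; try lra.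
    + intros t Ht. specialize (Hneg t Ht). lra.
    + intros t Ht. specialize (Hneg0 t Ht). lra.
    + exact (sturm_first_zero_le _ _ _ _ _ _ B0 B tau0 tau
               (H_sol_is_sol_pos Q 0 H0 HH0) (H_sol_is_sol_pos Q eps H HH)
               ltac:(intros; lra) (H_sol_limit0 Q 0 H0 HH0) HB0 (H_sol_limit0 Q eps H HH) HB
               Hneg0 Htau Hz Hneg).
Qed.
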